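(* Let $G$ be a finite simple graph on $2i$ vertices and let $J\in\mathcal{P}(G)$. Then for each integer $k$ with $0\le k\le i-\frac{|J|}{2}$, $$|C_k(J;G)| = |C_k(\emptyset;G^\ast_J)|.$$
   Context: All graphs are finite simple graphs; $G|_I$ is the induced subgraph on $I\subseteq V(G)$. $\mathcal{E}\mathcal{C}(G)=\{I\subseteq V(G): G|_I \text{ has no connected component of odd order}\}$. For a graph $G$ of even order, $\mathcal{P}(G)=\mathcal{E}\mathcal{C}(G)\cup\{V(G)\}$, a poset under inclusion. For $I\in\mathcal{P}(G)$ and $k\ge0$, $C_k(I;G)$ is the set of chains $I=I_0\subsetneq I_1\subsetneq\cdots\subsetneq I_k=V(G)$ with $I_j\in\mathcal{P}(G)$ for all $1\le j\le k$ (so $C_0(I;G)$ is $\{(V(G))\}$ if $I=V(G)$ and empty otherwise). The reconnected complement $G^\ast_J$ is the graph on $V(G)\setminus J$ in which $\{a,b\}$ is an edge iff there is a path from $a$ to $b$ in $G|_{J\cup\{a,b\}}$. *)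

From mathcomp Require Import all_boot.
Set Implicit Arguments. Unset Strict Implicit. Unset Printing Implicit Defensive.

(* A (simple) graph is given by a vertex set V : {set T} inside an ambient
   finite type T and an edge relation e : rel T (only its restriction to V
   matters). *)
Section Graphs.
Variable T : finType.

Definition irel (e : rel T) (S : {set T}) : rel T :=
  [rel x y | [&& x \in S, y \in S & e x y]].

Definition pathin (e : rel T) (S : {set T}) (a b : T) : bool :=
  [&& a \in S, b \in S & connect (irel e S) a b].

Definition comp (e : rel T) (I : {set T}) (x : T) : {set T} :=
  [set y in I | connect (irel e I) x y].

Definition EC (V : {set T}) (e : rel T) : {set {set T}} :=
  [set I : {set T} | (I \subset V) && [forall x in I, ~~ odd #|comp e I x|]].

Definition Pset (V : {set T}) (e : rel T) : {set {set T}} := V |: EC V e.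

Definition chains (V : {set T}) (e : rel T) (I : {set T}) (k : nat)
  : {set {ffun 'I_k.+1 -> {set T}}} :=
  [set c : {ffun 'I_k.+1 -> {set T}} |
     [&& c ord0 == I, c ord_max == V,
         [forall j : 'I_k.+1, (0 < j) ==> (c (inord j.-1) \proper c j)] &
         [forall j : 'I_k.+1, (0 < j) ==> (c j \in Pset V e)]]].

(* edge relation of the reconnected complement G^*_J (on vertex set V :\: J):
   a ~ b iff a <> b and there is a path from a to b in G|_{J ∪ {a,b}} *)
Definition rc (e : rel T) (J : {set T}) : rel T :=
  [rel a b | (a != b) && pathin e (J :|: [set a; b]) a b].

End Graphs.

From Pilot Require Import Defs.
From mathcomp Require Import all_boot.
Set Implicit Arguments. Unset Strict Implicit. Unset Printing Implicit Defensive.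

(* I |-> I \ J is an order isomorphism from the members of P(G) containing J
   onto P(G^*_J), so it maps C_k(J;G) bijectively onto C_k(emptyset;G^*_J).
   The components of G^*_J restricted to I \ J are exactly the components of
   G|_I with J removed, and each component of G|_I meets J in a union of
   components of G|_J, which have even order when J is in EC(G); so removing J
   preserves the parity of every component. *)

Lemma card_in_bij (aT rT : finType) (A : {pred aT}) (B : {pred rT})
    (f : aT -> rT) (g : rT -> aT) :
  {in A, forall x, f x \in B} -> {in B, forall y, g y \in A} ->
  {in A, cancel f g} -> {in B, cancel g f} -> #|A| = #|B|.
Proof.
move=> fAB gBA fK gK; rewrite -(card_in_imset (can_in_inj fK)).
apply: eq_card => y; apply/imsetP/idP => [[x xA ->]|yB]; first exact: fAB.
by exists (g y); rewrite ?gBA ?gK.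
Qed.

Section ComplementOfSuperset.
Variables (T : finType) (J : {set T}).

Lemma setDUK (X : {set T}) : X \subset ~: J -> (X :|: J) :\: J = X.
Proof. by move=> sXJ; rewrite setDUl setDv setU0; apply/setDidPl; rewrite disjoints_subset. Qed.

Lemma setUDK (X : {set T}) : J \subset X -> (X :\: J) :|: J = X.
Proof.
move=> sJX; apply/setP => z; rewrite !inE.
by case: (boolP (z \in J)) => [/(subsetP sJX) -> | _]; rewrite ?orbT ?orbF.
Qed.

Lemma setD2_subset (X Y : {set T}) : J \subset Y -> (X :\: J \subset Y :\: J) = (X \subset Y).
Proof.
move=> sJY; apply/idP/idP => [sXY|]; last exact: setSD.
apply/subsetP => z zX; case: (boolP (z \in J)) => [/(subsetP sJY)//|zJ].
by have /(subsetP sXY)/setDP[] : z \in X :\: J by rewrite inE zJ.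
Qed.

Lemma setD2_proper (X Y : {set T}) :
  J \subset X -> J \subset Y -> (X :\: J \proper Y :\: J) = (X \proper Y).
Proof. by move=> sJX sJY; rewrite !properE !setD2_subset. Qed.

Lemma setU2_proper (X Y : {set T}) :
  X \subset ~: J -> Y \subset ~: J -> (X :|: J \proper Y :|: J) = (X \proper Y).
Proof. by move=> sXJ sYJ; rewrite -setD2_proper ?subsetUr // !setDUK. Qed.

End ComplementOfSuperset.

Section Graph.
Variables (T : finType) (e : rel T).
Hypothesis e_sym : symmetric e.

Lemma connect_irel_sym (S : {set T}) : connect_sym (irel e S).
Proof.
by apply: sym_connect_sym => x y; rewrite /irel /= e_sym andbCA.
Qed.

Lemma connect_irel_equiv (S : {set T}) : equivalence_rel (connect (irel e S)).
Proof.
move=> x y z; split=> [|cxy]; first exact: connect0.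
by apply/idP/idP; apply: connect_trans; rewrite // connect_irel_sym.
Qed.

Lemma connect_irel_subset (S S' : {set T}) (x y : T) :
  S \subset S' -> connect (irel e S) x y -> connect (irel e S') x y.
Proof.
move=> sSS'; apply: connect_sub => a b /and3P[aS bS eab]; apply: connect1.
by rewrite /irel /= (subsetP sSS' _ aS) (subsetP sSS' _ bS).
Qed.

Lemma connect_irel_mem (S : {set T}) (x y : T) :
  connect (irel e S) x y -> x \in S -> y \in S.
Proof.
case/connectP=> p; elim: p x => [|z p IH] x /=; first by move=> _ ->.
by case/andP=> /and3P[_ zS _] pz yz _; apply: IH pz yz zS.
Qed.

Lemma eq_comp (I : {set T}) (x y : T) :
  connect (irel e I) x y -> Defs.comp e I x = Defs.comp e I y.
Proof. by move=> cxy; apply/setP => z; rewrite !inE ((connect_irel_equiv I x y z).2 cxy). Qed.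

Lemma even_card_compI (I J : {set T}) (x : T) :
  J \subset I -> {in J, forall y, ~~ odd #|Defs.comp e J y|} ->
  ~~ odd #|Defs.comp e I x :&: J|.
Proof.
move=> sJI evenJ; set D := Defs.comp e I x :&: J.
have partD := @equivalence_partitionP _ (connect (irel e J)) D
  (fun a b c _ _ _ => connect_irel_equiv J a b c).
rewrite (card_partition partD) -dvdn2; apply: dvdn_sum => _ /imsetP[z zD ->].
have /setIP[zIx zJ] := zD.
have -> : [set y in D | connect (irel e J) z y] = Defs.comp e J z.
  apply/setP => y; rewrite !inE; case czy: (connect _ z y); rewrite ?andbF // !andbT.
  have yJ := connect_irel_mem czy zJ; rewrite yJ (subsetP sJI _ yJ) andbT /=.
  move: zIx; rewrite inE => /andP[_ cxz].
  exact: connect_trans cxz (connect_irel_subset sJI czy).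
by rewrite dvdn2 evenJ.
Qed.

Lemma rcE (J : {set T}) (a b : T) :
  rc e J a b = (a != b) && connect (irel e (J :|: [set a; b])) a b.
Proof. by rewrite /rc /pathin /= !inE !eqxx !orbT. Qed.

Lemma connect_irel_rc (J I : {set T}) (a b : T) :
  J \subset I -> a \in I -> b \in I -> rc e J a b -> connect (irel e I) a b.
Proof.
move=> sJI aI bI; rewrite rcE => /andP[_]; apply: connect_irel_subset.
by rewrite !subUset sJI !sub1set aI bI.
Qed.

(* w is the first vertex outside J on a path from u to y in G|_I. *)
Lemma connect_irel_exit (J I : {set T}) (u y : T) :
  J \subset I -> y \in I :\: J -> connect (irel e I) u y ->
  exists2 w, w \in I :\: J &
    connect (irel (rc e J) (I :\: J)) w y /\ connect (irel e (J :|: [set w])) w u.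
Proof.
move=> sJI yIJ /connectP[p]; elim: p u => [|v p IH] u /=.
  by move=> _ <-; exists y => //; split; apply: connect0.
case/andP=> /and3P[uI vI euv] pv yv; have [w wIJ [cwy cwv]] := IH v pv yv.
have vJw : v \in J :|: [set w] by apply: connect_irel_mem cwv _; rewrite !inE eqxx orbT.
case: (boolP (u \in J)) => uJ.
  exists w => //; split=> //; apply: connect_trans cwv (connect1 _).
  by rewrite /irel /= vJw inE uJ e_sym.
have uIJ : u \in I :\: J by rewrite inE uJ.
exists u => //; split; last exact: connect0.
have [-> // | neq_uw] := eqVneq u w.
apply: connect_trans cwy; apply: connect1; rewrite /irel /= uIJ wIJ rcE neq_uw /=.
have sJw : J :|: [set w] \subset J :|: [set u; w] by rewrite setUS // sub1set !inE eqxx orbT.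
apply: (@connect_trans _ _ v).
  by apply: connect1; rewrite /irel /= (subsetP sJw _ vJw) !inE eqxx orbT euv.
by rewrite connect_irel_sym; apply: connect_irel_subset cwv.
Qed.

Lemma comp_rc (J I : {set T}) (x : T) : J \subset I -> x \in I :\: J ->
  Defs.comp (rc e J) (I :\: J) x = Defs.comp e I x :\: J.
Proof.
move=> sJI xIJ; apply/setP => y; rewrite !inE.
case: (boolP (y \in J)) => //= yJ; case: (boolP (y \in I)) => //= yI.
apply/idP/idP => [|cxy].
  apply: connect_sub => a b /and3P[/setDP[aI _] /setDP[bI _]].
  exact: connect_irel_rc.
have yIJ : y \in I :\: J by rewrite inE yJ.
have [w wIJ [cwy cwx]] := connect_irel_exit sJI yIJ cxy.
have : x \in J :|: [set w] by apply: connect_irel_mem cwx _; rewrite !inE eqxx orbT.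
by move: xIJ; rewrite !inE => /andP[/negbTE-> _] /= /eqP->.
Qed.

Lemma EC_rc (J I : {set T}) : J \in EC setT e -> J \subset I ->
  (I \in EC setT e) = (I :\: J \in EC (setT :\: J) (rc e J)).
Proof.
rewrite inE => /andP[_ /forall_inP evenJ] sJI.
rewrite !inE subsetT setSD ?subsetT //=.
have odd_compD x : odd #|Defs.comp e I x| = odd #|Defs.comp e I x :\: J|.
  by rewrite -(cardsID J) oddD (negbTE (even_card_compI x sJI evenJ)).
apply/forall_inP/forall_inP => evenI x.
  by move=> /[dup] xIJ /setDP[xI _]; rewrite comp_rc // -odd_compD evenI.
move=> xI; rewrite odd_compD.
have [-> | [y /setDP[cxy yJ]]] := set_0Vmem (Defs.comp e I x :\: J); first by rewrite cards0.
move: cxy; rewrite inE => /andP[yI cxy].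
have yIJ : y \in I :\: J by rewrite inE yJ.
by rewrite (eq_comp cxy) -comp_rc // evenI.
Qed.

Lemma Pset_rc (J I : {set T}) : J \in Pset setT e -> J \subset I ->
  (I \in Pset setT e) = (I :\: J \in Pset (setT :\: J) (rc e J)).
Proof.
move=> PJ sJI; rewrite /Pset !in_setU1.
have -> : (I :\: J == setT :\: J) = (I == setT).
  by apply/eqP/eqP => [IJ|-> //]; rewrite -(setUDK sJI) IJ setUDK ?subsetT.
case: (I =P setT) => //= neqIT.
move: PJ; rewrite in_setU1 => /orP[/eqP eqJT | ECJ]; last exact: EC_rc.
by case: neqIT; apply/eqP; rewrite eqEsubset subsetT -eqJT.
Qed.

End Graph.

Section Chains.
Variables (T : finType) (e : rel T) (J : {set T}) (k : nat).
Hypotheses (e_sym : symmetric e) (PJ : J \in Pset setT e).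

Let chainsJ := chains setT e J k.
Let chains_rc := chains (setT :\: J) (rc e J) set0 k.

Lemma chains_sup (c : {ffun 'I_k.+1 -> {set T}}) : c \in chainsJ -> forall j, J \subset c j.
Proof.
rewrite inE => /and4P[/eqP c0 _ /forallP c_proper _] j.
rewrite -(inord_val j); elim: (val j) (ltn_ord j) => [_|n IH ltnk].
  by rewrite (_ : inord 0 = ord0) ?c0 //; apply: val_inj; rewrite /= inordK.
have := c_proper (inord n.+1); rewrite inordK //= => /proper_sub.
exact/subset_trans/IH/ltnW.
Qed.

Lemma chains_rc_sub (c : {ffun 'I_k.+1 -> {set T}}) : c \in chains_rc -> forall j, c j \subset ~: J.
Proof.
rewrite inE -setTD => /and4P[/eqP c0 _ _ /forallP c_P] j.
have [j0 | jpos] := posnP j.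
  by rewrite (_ : j = ord0) ?c0 ?sub0set //; apply: val_inj.
by have := c_P j; rewrite jpos !inE => /orP[/eqP-> | /andP[]].
Qed.

Lemma chains_setD (c : {ffun 'I_k.+1 -> {set T}}) :
  c \in chainsJ -> [ffun j => c j :\: J] \in chains_rc.
Proof.
move=> cJ; have sup := chains_sup cJ.
move: cJ; rewrite !inE => /and4P[/eqP c0 /eqP cT /forallP c_proper /forallP c_P].
rewrite !ffunE c0 cT setDv !eqxx /=; apply/andP; split; apply/forallP => j.
  by rewrite !ffunE setD2_proper.
by rewrite ffunE -Pset_rc.
Qed.

Lemma chains_setU (c : {ffun 'I_k.+1 -> {set T}}) :
  c \in chains_rc -> [ffun j => c j :|: J] \in chainsJ.
Proof.
move=> cJ; have sub := chains_rc_sub cJ.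
move: cJ; rewrite !inE => /and4P[/eqP c0 /eqP cT /forallP c_proper /forallP c_P].
rewrite !ffunE c0 cT set0U setUDK ?subsetT // !eqxx /=.
apply/andP; split; apply/forallP => j; first by rewrite !ffunE setU2_proper.
by rewrite ffunE (Pset_rc e_sym PJ (subsetUr _ _)) setDUK.
Qed.

End Chains.

Theorem mainTheorem5 (T : finType) (e : rel T) (i : nat)
  (e_sym : symmetric e) (e_irr : irreflexive e)
  (cardT : #|T| = (2 * i)%N)
  (J : {set T}) (HJ : J \in Pset [set: T] e)
  (k : nat) (hk : (k <= i - #|J| %/ 2)%N) :
  #|chains [set: T] e J k| = #|chains ([set: T] :\: J) (rc e J) set0 k|.
Proof.
apply: (card_in_bij (f := fun c : {ffun _ -> _} => [ffun j => c j :\: J])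
                   (g := fun c : {ffun _ -> _} => [ffun j => c j :|: J])).
- exact: chains_setD.
- exact: chains_setU.
- by move=> c /chains_sup cJ; apply/ffunP => j; rewrite !ffunE setUDK.
- by move=> c /chains_rc_sub cJ; apply/ffunP => j; rewrite !ffunE setDUK.
Qed.
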